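(* Let $v$ satisfy the standing assumptions and the doubling condition, and let $g(x)=v(1-x^{-1})$. Fix $A>1$, set $b_0=1$ and inductively $b_{n+1}=\min\{l\in\mathbb{N}: g(2^l)>A\,g(2^{b_n})\}$. Then $u(z)=\operatorname{Re}\sum_{k=0}^\infty g(2^{b_k})z^{2^{b_k}}$, $z\in\mathbb{D}$, belongs to $h^\infty_v$.
   Context: Standing assumptions: $v:[0,1)\to[1,\infty)$ is positive, increasing, continuous, $v(0)=1$, $\lim_{r\to1}v(r)=+\infty$. Doubling condition: there is $D\ge1$ with $v(1-d)\le D\,v(1-2d)$ for all $d\in(0,1/2]$. $h^\infty_v$ is the set of real harmonic $u$ on $\mathbb{D}$ with $|u(z)|\le Kv(|z|)$ for some $K>0$. *)

From Stdlib Require Import Reals Lra.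
Open Scope R_scope.

(* Standing assumptions on the weight v : [0,1) -> [1,oo). Only values on [0,1) matter. *)
Definition standing_weight (v : R -> R) : Prop :=
  (forall r, 0 <= r < 1 -> 1 <= v r) /\
  (forall r s, 0 <= r -> r <= s -> s < 1 -> v r <= v s) /\
  (forall r, 0 <= r < 1 -> forall eps, 0 < eps -> exists delta, 0 < delta /\
      forall s, 0 <= s < 1 -> Rabs (s - r) < delta -> Rabs (v s - v r) < eps) /\
  v 0 = 1 /\
  (forall M, exists r0, r0 < 1 /\ forall r, r0 <= r < 1 -> M <= v r).

Definition doubling (v : R -> R) : Prop :=
  exists D, 1 <= D /\ forall d, 0 < d <= /2 -> v (1 - d) <= D * v (1 - 2 * d).

Definition gfun (v : R -> R) (x : R) : R := v (1 - / x).

(* (x + i y)^n as a pair (real part, imaginary part) *)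
Fixpoint cpow (x y : R) (n : nat) : R * R :=
  match n with
  | O => (1, 0)
  | S m => let (a, b) := cpow x y m in (a * x - b * y, a * y + b * x)
  end.

Definition in_disk (x y : R) : Prop := x * x + y * y < 1.

Definition cont2_on_disk (f : R -> R -> R) : Prop :=
  forall x y, in_disk x y -> forall eps, 0 < eps -> exists delta, 0 < delta /\
    forall x' y', Rabs (x' - x) < delta -> Rabs (y' - y) < delta ->
      Rabs (f x' y' - f x y) < eps.

Definition harmonic_on_disk (u : R -> R -> R) : Prop :=
  exists ux uy uxx uxy uyx uyy : R -> R -> R,
    (forall x y, in_disk x y ->
       derivable_pt_lim (fun t => u t y) x (ux x y) /\
       derivable_pt_lim (fun t => u x t) y (uy x y) /\
       derivable_pt_lim (fun t => ux t y) x (uxx x y) /\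
       derivable_pt_lim (fun t => ux x t) y (uxy x y) /\
       derivable_pt_lim (fun t => uy t y) x (uyx x y) /\
       derivable_pt_lim (fun t => uy x t) y (uyy x y) /\
       uxx x y + uyy x y = 0) /\
    cont2_on_disk u /\ cont2_on_disk ux /\ cont2_on_disk uy /\
    cont2_on_disk uxx /\ cont2_on_disk uxy /\ cont2_on_disk uyx /\ cont2_on_disk uyy.

Definition in_h_inf_v (v : R -> R) (u : R -> R -> R) : Prop :=
  harmonic_on_disk u /\
  exists K, 0 < K /\ forall x y, in_disk x y -> Rabs (u x y) <= K * v (sqrt (x * x + y * y)).

(* Write c_k = g(2^(b_k)) = v(r_(b_k)) with r_l = 1 - 2^-l, so that r_l^(2^l) <= 1/2.
   Doubling gives c_k <= D^(b_k), which is polynomial in the exponent 2^(b_k); hence the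
   lacunary series and its term-wise first and second derivatives converge locally uniformly
   on the disk, and u is a C^2 sum of the harmonic polynomials Re (x + iy)^n.
   For the growth bound at radius r, let p be the first index with r < r_(b_p). Below p the
   coefficients grow at least geometrically with ratio A up to c_(p-1) <= v(r); minimality of
   b_p gives c_p <= D A v(r); above p the factor r^(2^(b_k)) <= 2^(-2^(b_k - b_p)) beats the
   growth D^(b_k - b_p). Both tails are geometric, so |u| <= K v(r). *)

From Stdlib Require Import Reals Lra Lia Wf_nat Classical ClassicalEpsilon.
Open Scope R_scope.

(** * Real and imaginary parts of (x + iy)^n *)

Definition re_pow (n : nat) (x y : R) : R := fst (cpow x y n).
Definition im_pow (n : nat) (x y : R) : R := snd (cpow x y n).

Lemma re_pow_0 x y : re_pow 0 x y = 1.
Proof. reflexivity. Qed.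

Lemma im_pow_0 x y : im_pow 0 x y = 0.
Proof. reflexivity. Qed.

Lemma re_pow_S n x y : re_pow (S n) x y = re_pow n x y * x - im_pow n x y * y.
Proof. unfold re_pow, im_pow; simpl; destruct (cpow x y n); reflexivity. Qed.

Lemma im_pow_S n x y : im_pow (S n) x y = re_pow n x y * y + im_pow n x y * x.
Proof. unfold re_pow, im_pow; simpl; destruct (cpow x y n); reflexivity. Qed.

Lemma re_im_pow_norm n x y :
  re_pow n x y * re_pow n x y + im_pow n x y * im_pow n x y = (x * x + y * y) ^ n.
Proof.
  induction n as [|n IH]; [rewrite re_pow_0, im_pow_0; simpl; ring|].
  rewrite re_pow_S, im_pow_S; simpl; rewrite <- IH; ring.
Qed.

Lemma re_im_pow_bound n x y r : 0 <= r -> x * x + y * y <= r * r ->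
  Rabs (re_pow n x y) <= r ^ n /\ Rabs (im_pow n x y) <= r ^ n.
Proof.
  intros Hr Hxy.
  assert (Hnorm : (x * x + y * y) ^ n <= r ^ n * r ^ n).
  { rewrite <- Rpow_mult_distr; apply pow_incr; split; nra. }
  pose proof (re_im_pow_norm n x y).
  pose proof (pow_le r n Hr).
  split; rewrite <- (Rabs_pos_eq (r ^ n)) by lra; apply Rsqr_le_abs_0; unfold Rsqr; nra.
Qed.

Lemma derivable_pt_lim_eq_r f x l l' :
  derivable_pt_lim f x l -> l = l' -> derivable_pt_lim f x l'.
Proof. now intros H <-. Qed.

Lemma derivable_re_im_pow_x n x y :
  derivable_pt_lim (fun t => re_pow n t y) x (INR n * re_pow (n - 1) x y) /\
  derivable_pt_lim (fun t => im_pow n t y) x (INR n * im_pow (n - 1) x y).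
Proof.
  induction n as [|n [IHre IHim]].
  - split; (eapply derivable_pt_lim_eq_r; [apply derivable_pt_lim_const | simpl; ring]).
  - split.
    + apply (derivable_pt_lim_ext (fun t => re_pow n t y * t - im_pow n t y * y));
        [intro; symmetry; apply re_pow_S|].
      eapply derivable_pt_lim_eq_r.
      { apply derivable_pt_lim_minus.
        - apply derivable_pt_lim_mult; [exact IHre | apply derivable_pt_lim_id].
        - apply derivable_pt_lim_mult; [exact IHim | apply derivable_pt_lim_const]. }
      destruct n as [|n]; [simpl; ring|].
      rewrite !Nat.sub_succ, !Nat.sub_0_r.
      rewrite re_pow_S, (S_INR (S n)); ring.
    + apply (derivable_pt_lim_ext (fun t => re_pow n t y * y + im_pow n t y * t));
        [intro; symmetry; apply im_pow_S|].
      eapply derivable_pt_lim_eq_r.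
      { apply derivable_pt_lim_plus.
        - apply derivable_pt_lim_mult; [exact IHre | apply derivable_pt_lim_const].
        - apply derivable_pt_lim_mult; [exact IHim | apply derivable_pt_lim_id]. }
      destruct n as [|n]; [simpl; ring|].
      rewrite !Nat.sub_succ, !Nat.sub_0_r.
      rewrite im_pow_S, (S_INR (S n)); ring.
Qed.

Lemma derivable_re_im_pow_y n x y :
  derivable_pt_lim (fun t => re_pow n x t) y (- (INR n * im_pow (n - 1) x y)) /\
  derivable_pt_lim (fun t => im_pow n x t) y (INR n * re_pow (n - 1) x y).
Proof.
  induction n as [|n [IHre IHim]].
  - split; (eapply derivable_pt_lim_eq_r; [apply derivable_pt_lim_const | simpl; ring]).
  - split.
    + apply (derivable_pt_lim_ext (fun t => re_pow n x t * x - im_pow n x t * t));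
        [intro; symmetry; apply re_pow_S|].
      eapply derivable_pt_lim_eq_r.
      { apply derivable_pt_lim_minus.
        - apply derivable_pt_lim_mult; [exact IHre | apply derivable_pt_lim_const].
        - apply derivable_pt_lim_mult; [exact IHim | apply derivable_pt_lim_id]. }
      destruct n as [|n]; [simpl; ring|].
      rewrite !Nat.sub_succ, !Nat.sub_0_r.
      rewrite im_pow_S, (S_INR (S n)); ring.
    + apply (derivable_pt_lim_ext (fun t => re_pow n x t * t + im_pow n x t * x));
        [intro; symmetry; apply im_pow_S|].
      eapply derivable_pt_lim_eq_r.
      { apply derivable_pt_lim_plus.
        - apply derivable_pt_lim_mult; [exact IHre | apply derivable_pt_lim_id].
        - apply derivable_pt_lim_mult; [exact IHim | apply derivable_pt_lim_const]. }
      destruct n as [|n]; [simpl; ring|].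
      rewrite !Nat.sub_succ, !Nat.sub_0_r.
      rewrite re_pow_S, (S_INR (S n)); ring.
Qed.
(** * Joint continuity *)

Definition continuous2_at (f : R -> R -> R) (x y : R) : Prop :=
  forall eps, 0 < eps -> exists delta, 0 < delta /\
    forall x' y', Rabs (x' - x) < delta -> Rabs (y' - y) < delta ->
      Rabs (f x' y' - f x y) < eps.

Lemma continuous2_at_ext f g x y :
  (forall a b, f a b = g a b) -> continuous2_at f x y -> continuous2_at g x y.
Proof.
  intros Efg Hf eps Heps; destruct (Hf eps Heps) as [d [Hd Hfd]].
  exists d; split; [exact Hd|]; intros; rewrite <- !Efg; auto.
Qed.

Lemma continuous2_at_const c x y : continuous2_at (fun _ _ => c) x y.
Proof.
  intros eps Heps; exists 1; split; [lra|]; intros.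
  rewrite Rminus_diag, Rabs_R0; exact Heps.
Qed.

Lemma continuous2_at_fst x y : continuous2_at (fun a _ => a) x y.
Proof. intros eps Heps; exists eps; split; [exact Heps|]; auto. Qed.

Lemma continuous2_at_snd x y : continuous2_at (fun _ b => b) x y.
Proof. intros eps Heps; exists eps; split; [exact Heps|]; auto. Qed.

Lemma continuous2_at_opp f x y :
  continuous2_at f x y -> continuous2_at (fun a b => - f a b) x y.
Proof.
  intros Hf eps Heps; destruct (Hf eps Heps) as [d [Hd Hfd]].
  exists d; split; [exact Hd|]; intros.
  replace (- f x' y' - - f x y) with (- (f x' y' - f x y)) by ring.
  rewrite Rabs_Ropp; auto.
Qed.

Lemma continuous2_at_common_delta f g x y :
  continuous2_at f x y -> continuous2_at g x y -> forall eps, 0 < eps ->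
  exists delta, 0 < delta /\ forall x' y', Rabs (x' - x) < delta -> Rabs (y' - y) < delta ->
    Rabs (f x' y' - f x y) < eps /\ Rabs (g x' y' - g x y) < eps.
Proof.
  intros Hf Hg eps Heps.
  destruct (Hf eps Heps) as [d1 [Hd1 Hfd]]; destruct (Hg eps Heps) as [d2 [Hd2 Hgd]].
  exists (Rmin d1 d2); split; [now apply Rmin_pos|].
  intros x' y' Hx Hy; pose proof (Rmin_l d1 d2); pose proof (Rmin_r d1 d2).
  split; [apply Hfd | apply Hgd]; lra.
Qed.

Lemma continuous2_at_plus f g x y : continuous2_at f x y -> continuous2_at g x y ->
  continuous2_at (fun a b => f a b + g a b) x y.
Proof.
  intros Hf Hg eps Heps.
  destruct (continuous2_at_common_delta f g x y Hf Hg (eps / 2)) as [d [Hd Hfg]]; [lra|].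
  exists d; split; [exact Hd|]; intros x' y' Hx Hy.
  destruct (Hfg x' y' Hx Hy) as [Hf' Hg'].
  replace (f x' y' + g x' y' - (f x y + g x y))
    with ((f x' y' - f x y) + (g x' y' - g x y)) by ring.
  pose proof (Rabs_triang (f x' y' - f x y) (g x' y' - g x y)); lra.
Qed.

Lemma continuous2_at_mult f g x y : continuous2_at f x y -> continuous2_at g x y ->
  continuous2_at (fun a b => f a b * g a b) x y.
Proof.
  intros Hf Hg eps Heps.
  set (a := f x y); set (b := g x y).
  set (S := Rabs a + Rabs b + 1).
  assert (HS : 0 < S) by (unfold S; pose proof (Rabs_pos a); pose proof (Rabs_pos b); lra).
  set (e := Rmin 1 (eps / (2 * S))).
  assert (He : 0 < e) by (apply Rmin_pos; [lra | apply Rdiv_lt_0_compat; lra]).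
  assert (He1 : e <= 1) by apply Rmin_l.
  assert (HeS : e * S <= eps / 2).
  { apply Rle_trans with (eps / (2 * S) * S); [apply Rmult_le_compat_r; [lra | apply Rmin_r]|].
    right; field; lra. }
  destruct (continuous2_at_common_delta f g x y Hf Hg e He) as [d [Hd Hfg]].
  exists d; split; [exact Hd|]; intros x' y' Hx Hy.
  destruct (Hfg x' y' Hx Hy) as [Hf' Hg']; fold a in Hf'; fold b in Hg'.
  assert (Hfa : Rabs (f x' y') <= Rabs a + 1).
  { pose proof (Rabs_triang_inv (f x' y') a); lra. }
  replace (f x' y' * g x' y' - a * b)
    with (f x' y' * (g x' y' - b) + b * (f x' y' - a)) by ring.
  eapply Rle_lt_trans; [apply Rabs_triang|]; rewrite !Rabs_mult.
  assert (Rabs (f x' y') * Rabs (g x' y' - b) <= (Rabs a + 1) * e)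
    by (apply Rmult_le_compat; try apply Rabs_pos; lra).
  assert (Rabs b * Rabs (f x' y' - a) <= Rabs b * e)
    by (apply Rmult_le_compat_l; [apply Rabs_pos | lra]).
  unfold S in HeS; nra.
Qed.

Lemma continuous2_at_re_im_pow n x y :
  continuous2_at (re_pow n) x y /\ continuous2_at (im_pow n) x y.
Proof.
  induction n as [|n [IHre IHim]].
  { split; [apply (continuous2_at_ext (fun _ _ => 1)) | apply (continuous2_at_ext (fun _ _ => 0))];
      reflexivity || apply continuous2_at_const. }
  split.
  - apply (continuous2_at_ext (fun a b => re_pow n a b * a + - (im_pow n a b * b)));
      [intros; rewrite re_pow_S; ring|].
    apply continuous2_at_plus; [|apply continuous2_at_opp];
      apply continuous2_at_mult; auto using continuous2_at_fst, continuous2_at_snd.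
  - apply (continuous2_at_ext (fun a b => re_pow n a b * b + im_pow n a b * a));
      [intros; rewrite im_pow_S; ring|].
    apply continuous2_at_plus;
      apply continuous2_at_mult; auto using continuous2_at_fst, continuous2_at_snd.
Qed.

(** * Series of functions on the disk *)

Definition lim_seq (s : nat -> R) : R := epsilon (inhabits 0) (Un_cv s).

Lemma lim_seq_spec s l : Un_cv s l -> Un_cv s (lim_seq s).
Proof. intro Hl; unfold lim_seq; apply epsilon_spec; now exists l. Qed.

Lemma Rabs_lim_le s l B : Un_cv s l -> (forall N, Rabs (s N) <= B) -> Rabs l <= B.
Proof.
  intros Hl HB; apply Rnot_lt_le; intro Hlt.
  destruct (Hl (Rabs l - B)) as [N HN]; [lra|].
  specialize (HN N (le_n N)); specialize (HB N); unfold Rdist in HN.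
  pose proof (Rabs_triang_inv l (s N)); rewrite Rabs_minus_sym in HN; lra.
Qed.

Lemma nonneg_series_bounded_cv (a : nat -> R) B :
  (forall k, 0 <= a k) -> (forall N, sum_f_R0 a N <= B) ->
  exists l, Un_cv (fun N => sum_f_R0 a N) l.
Proof.
  intros Ha HB.
  destruct (growing_cv (fun N => sum_f_R0 a N)) as [l Hl]; [| |now exists l].
  - intro N; simpl; pose proof (Ha (S N)); lra.
  - exists B; intros s [N ->]; apply HB.
Qed.

Definition partial_sum (F : nat -> R -> R -> R) (N : nat) (x y : R) : R :=
  sum_f_R0 (fun k => F k x y) N.

Definition series_sum (F : nat -> R -> R -> R) (x y : R) : R :=
  lim_seq (fun N => partial_sum F N x y).

Definition normally_summable_on_subdisks (F : nat -> R -> R -> R) : Prop :=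
  forall p, 0 <= p < 1 -> exists M : nat -> R,
    (exists l, Un_cv (fun N => sum_f_R0 M N) l) /\
    forall k x y, x * x + y * y <= p -> Rabs (F k x y) <= M k.

Lemma subdisk_neighbourhood x y : in_disk x y -> exists delta p, 0 < delta /\ 0 <= p < 1 /\
  forall x' y', Rabs (x' - x) < delta -> Rabs (y' - y) < delta -> x' * x' + y' * y' <= p.
Proof.
  unfold in_disk; intro Hxy; set (q := x * x + y * y) in *.
  set (delta := Rmin 1 ((1 - q) / 12)).
  assert (Hd1 : delta <= 1) by apply Rmin_l.
  assert (Hdq : delta <= (1 - q) / 12) by apply Rmin_r.
  exists delta, ((1 + q) / 2); split; [apply Rmin_pos; lra|].
  split; [unfold q in *; split; nra|].
  intros x' y' Hx Hy; apply Rabs_def2 in Hx; apply Rabs_def2 in Hy.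
  assert (-1 < x < 1 /\ -1 < y < 1) by (unfold q in *; split; nra).
  assert (x' * x' <= x * x + 3 * delta) by nra.
  assert (y' * y' <= y * y + 3 * delta) by nra.
  unfold q in *; lra.
Qed.

Section NormallySummable.

Variable F : nat -> R -> R -> R.
Hypothesis F_summable : normally_summable_on_subdisks F.

Lemma series_sum_cv x y : in_disk x y ->
  Un_cv (fun N => partial_sum F N x y) (series_sum F x y).
Proof.
  unfold in_disk; intro Hxy.
  destruct (F_summable (x * x + y * y)) as [M [[lM HM] HFM]]; [split; nra|].
  assert (Habs : { l | Un_cv (fun N => sum_f_R0 (fun k => Rabs (F k x y)) N) l }).
  { apply Rseries_CV_comp with M; [|now exists lM].
    intro k; split; [apply Rabs_pos | apply HFM; lra]. }
  destruct (cv_cauchy_2 _ (cauchy_abs _ (cv_cauchy_1 _ Habs))) as [l Hl].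
  exact (lim_seq_spec _ l Hl).
Qed.

Lemma series_sum_cvu p : 0 <= p < 1 -> forall eps, 0 < eps -> exists N, forall n, (N <= n)%nat ->
  forall x y, x * x + y * y <= p -> Rabs (series_sum F x y - partial_sum F n x y) < eps.
Proof.
  intros Hp eps Heps.
  destruct (F_summable p Hp) as [M [[lM HM] HFM]].
  destruct (HM eps Heps) as [N HN]; exists N; intros n Hn x y Hxy.
  assert (Hcv : Un_cv (fun N => partial_sum F N x y) (series_sum F x y))
    by (apply series_sum_cv; unfold in_disk; lra).
  pose proof (sum_maj1 (fun k _ => F k x y) M 0 _ _ n Hcv HM (fun k => HFM k x y Hxy)) as Htail.
  specialize (HN n Hn); unfold Rdist in HN; rewrite Rabs_minus_sym in HN.
  pose proof (Rle_abs (lM - sum_f_R0 M n)); unfold SP in Htail; unfold partial_sum; lra.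
Qed.

Lemma continuous2_at_partial_sum N x y :
  (forall k, continuous2_at (F k) x y) -> continuous2_at (partial_sum F N) x y.
Proof.
  intro HF; induction N as [|N IH]; [exact (HF 0%nat)|].
  exact (continuous2_at_plus (partial_sum F N) (F (S N)) x y IH (HF (S N))).
Qed.

Lemma series_sum_continuous :
  (forall k x y, continuous2_at (F k) x y) -> cont2_on_disk (series_sum F).
Proof.
  intros HF x y Hxy eps Heps.
  destruct (subdisk_neighbourhood x y Hxy) as [d0 [p [Hd0 [Hp Hnear]]]].
  destruct (series_sum_cvu p Hp (eps / 3)) as [N HN]; [lra|].
  destruct (continuous2_at_partial_sum N x y (fun k => HF k x y) (eps / 3)) as [d1 [Hd1 HSN]];
    [lra|].
  exists (Rmin d0 d1); split; [now apply Rmin_pos|]; intros x' y' Hx Hy.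
  pose proof (Rmin_l d0 d1); pose proof (Rmin_r d0 d1).
  assert (Hp' : x' * x' + y' * y' <= p) by (apply Hnear; lra).
  assert (Hp0 : x * x + y * y <= p) by (apply Hnear; rewrite Rminus_diag, Rabs_R0; lra).
  pose proof (HN N (le_n N) x' y' Hp'); pose proof (HN N (le_n N) x y Hp0).
  specialize (HSN x' y' ltac:(lra) ltac:(lra)).
  replace (series_sum F x' y' - series_sum F x y) with
    ((series_sum F x' y' - partial_sum F N x' y') + (partial_sum F N x' y' - partial_sum F N x y)
     - (series_sum F x y - partial_sum F N x y)) by ring.
  eapply Rle_lt_trans; [apply Rabs_triang|]; rewrite Rabs_Ropp.
  pose proof (Rabs_triang (series_sum F x' y' - partial_sum F N x' y')
                          (partial_sum F N x' y' - partial_sum F N x y)); lra.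
Qed.

End NormallySummable.

Lemma series_sum_derivable_x F G :
  normally_summable_on_subdisks F -> normally_summable_on_subdisks G ->
  (forall k y x, derivable_pt_lim (fun t => F k t y) x (G k x y)) ->
  forall x y, in_disk x y -> derivable_pt_lim (fun t => series_sum F t y) x (series_sum G x y).
Proof.
  intros HF HG HFG x y Hxy.
  destruct (subdisk_neighbourhood x y Hxy) as [d [p [Hd [Hp Hnear]]]].
  assert (Hball : forall t, Boule x (mkposreal d Hd) t -> t * t + y * y <= p).
  { unfold Boule; simpl; intros t Ht; apply Hnear; [exact Ht|].
    rewrite Rminus_diag, Rabs_R0; exact Hd. }
  apply (CVU_derivable (fun n t => partial_sum F n t y) (fun n t => partial_sum G n t y)
    (fun t => series_sum F t y) (fun t => series_sum G t y) x (mkposreal d Hd)).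
  - intros eps Heps; destruct (series_sum_cvu G HG p Hp eps Heps) as [N HN].
    exists N; intros n t Hn Ht; apply HN; auto.
  - intros t Ht; apply series_sum_cv; [exact HF|]; specialize (Hball t Ht); unfold in_disk; lra.
  - intros n t _; induction n as [|n IH]; [apply HFG|].
    exact (derivable_pt_lim_plus _ _ t _ _ IH (HFG (S n) y t)).
  - unfold Boule; simpl; rewrite Rminus_diag, Rabs_R0; exact Hd.
Qed.

Lemma series_sum_derivable_y F G :
  normally_summable_on_subdisks F -> normally_summable_on_subdisks G ->
  (forall k x y, derivable_pt_lim (fun t => F k x t) y (G k x y)) ->
  forall x y, in_disk x y -> derivable_pt_lim (fun t => series_sum F x t) y (series_sum G x y).
Proof.
  intros HF HG HFG x y Hxy.
  set (swap H := fun (k : nat) (a b : R) => H k b a : R).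
  assert (Hswap : forall H, normally_summable_on_subdisks H ->
                    normally_summable_on_subdisks (swap H)).
  { intros H HH p Hp; destruct (HH p Hp) as [M [HM HHM]].
    exists M; split; [exact HM|]; intros k a b Hab; apply HHM; lra. }
  apply (series_sum_derivable_x (swap F) (swap G) (Hswap F HF) (Hswap G HG) HFG y x).
  unfold in_disk in *; lra.
Qed.

Lemma series_sum_add_eq_0 F G x y :
  normally_summable_on_subdisks F -> normally_summable_on_subdisks G ->
  (forall k a b, F k a b + G k a b = 0) -> in_disk x y ->
  series_sum F x y + series_sum G x y = 0.
Proof.
  intros HF HG HFG Hxy.
  apply (UL_sequence (fun N => partial_sum F N x y + partial_sum G N x y)).
  - exact (CV_plus _ _ _ _ (series_sum_cv F HF x y Hxy) (series_sum_cv G HG x y Hxy)).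
  - intros eps Heps; exists 0%nat; intros n _; unfold Rdist, partial_sum.
    rewrite <- plus_sum, (sum_eq _ (fun _ => 0)) by (intros; apply HFG).
    rewrite sum_cte, Rmult_0_l, Rminus_diag, Rabs_R0; exact Heps.
Qed.

(** * Harmonic power series *)

Lemma pow_le_pow_of_le_1 r i j : 0 <= r <= 1 -> (i <= j)%nat -> r ^ j <= r ^ i.
Proof.
  intros Hr Hij; replace j with (i + (j - i))%nat by lia; rewrite pow_add.
  pose proof (pow_le r i (proj1 Hr)); pose proof (pow_le r (j - i) (proj1 Hr)).
  assert (r ^ (j - i) <= 1) by (rewrite <- (pow1 (j - i)); apply pow_incr; lra).
  nra.
Qed.

Lemma pow_sub_2_le r n : 0 <= r <= 1 -> r ^ 2 * r ^ (n - 2) <= r ^ n.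
Proof.
  intro Hr; destruct n as [|[|n]]; simpl; [nra | nra |].
  rewrite Nat.sub_0_r; lra.
Qed.

Definition coef_family (a : nat -> R) (q : nat -> R -> R -> R) (e : nat -> nat)
  (k : nat) (x y : R) : R := a k * q (e k) x y.

Lemma continuous2_at_coef_family a q e k x y :
  (forall n, continuous2_at (q n) x y) -> continuous2_at (coef_family a q e k) x y.
Proof.
  intro Hq; apply continuous2_at_mult; [apply continuous2_at_const | apply Hq].
Qed.

Section PowerSeries.

Variables (c : nat -> R) (m : nat -> nat).

Hypothesis c_summable : forall rho, 0 <= rho < 1 -> exists B, forall N,
  sum_f_R0 (fun k => Rabs (c k) * INR (S (m k)) ^ 2 * rho ^ m k) N <= B.

Lemma coef_family_summable a q e :
  (forall n x y r, 0 <= r -> x * x + y * y <= r * r -> Rabs (q n x y) <= r ^ n) ->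
  (forall k, Rabs (a k) <= Rabs (c k) * INR (S (m k)) ^ 2) ->
  (forall k, (m k - 2 <= e k)%nat) ->
  normally_summable_on_subdisks (coef_family a q e).
Proof.
  intros Hq Ha He p Hp.
  set (rho := (1 + p) / 2).
  assert (Hrho : / 2 <= rho < 1) by (unfold rho; lra).
  set (M k := Rabs (c k) * INR (S (m k)) ^ 2 * rho ^ m k * 4).
  exists M; split.
  - destruct (c_summable rho ltac:(lra)) as [B HB].
    apply (nonneg_series_bounded_cv M (4 * B)).
    + intro k; unfold M; pose proof (Rabs_pos (c k)); pose proof (pow_le rho (m k) ltac:(lra)).
      pose proof (pow2_ge_0 (INR (S (m k)))).
      apply Rmult_le_pos; [apply Rmult_le_pos; [apply Rmult_le_pos|]|]; lra.
    + intro N; unfold M.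
      rewrite <- (scal_sum (fun k => Rabs (c k) * INR (S (m k)) ^ 2 * rho ^ m k)).
      specialize (HB N); lra.
  - intros k x y Hxy; unfold coef_family, M.
    assert (Hqe : Rabs (q (e k) x y) <= rho ^ e k) by (apply Hq; unfold rho in *; nra).
    assert (Hexp : rho ^ e k <= 4 * rho ^ m k).
    { pose proof (pow_le_pow_of_le_1 rho _ _ ltac:(lra) (He k)).
      pose proof (pow_sub_2_le rho (m k) ltac:(lra)).
      assert (0 <= (rho ^ 2 - / 4) * rho ^ (m k - 2))
        by (apply Rmult_le_pos; [simpl; nra | apply pow_le; lra]).
      lra. }
    pose proof (Rabs_pos (c k)); pose proof (Rabs_pos (q (e k) x y)).
    assert (0 <= INR (S (m k)) ^ 2) by apply pow2_ge_0.
    rewrite Rabs_mult.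
    apply Rle_trans with (Rabs (c k) * INR (S (m k)) ^ 2 * (4 * rho ^ m k)); [|right; ring].
    apply Rmult_le_compat; try lra; [apply Rabs_pos | apply Ha].
Qed.


Definition ps_term := coef_family c re_pow m.
Definition ps_term_x := coef_family (fun k => c k * INR (m k)) re_pow (fun k => m k - 1)%nat.
Definition ps_term_y :=
  coef_family (fun k => - (c k * INR (m k))) im_pow (fun k => m k - 1)%nat.
Definition ps_term_xx :=
  coef_family (fun k => c k * INR (m k) * INR (m k - 1)) re_pow (fun k => m k - 2)%nat.
Definition ps_term_xy :=
  coef_family (fun k => - (c k * INR (m k) * INR (m k - 1))) im_pow (fun k => m k - 2)%nat.
Definition ps_term_yy :=
  coef_family (fun k => - (c k * INR (m k) * INR (m k - 1))) re_pow (fun k => m k - 2)%nat.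

Lemma ps_term_derivable_x k y x :
  derivable_pt_lim (fun t => ps_term k t y) x (ps_term_x k x y).
Proof.
  eapply derivable_pt_lim_eq_r;
    [apply derivable_pt_lim_scal, (proj1 (derivable_re_im_pow_x _ _ _)) |].
  unfold ps_term_x, coef_family; ring.
Qed.

Lemma ps_term_derivable_y k x y :
  derivable_pt_lim (fun t => ps_term k x t) y (ps_term_y k x y).
Proof.
  eapply derivable_pt_lim_eq_r;
    [apply derivable_pt_lim_scal, (proj1 (derivable_re_im_pow_y _ _ _)) |].
  unfold ps_term_y, coef_family; ring.
Qed.

Lemma ps_term_x_derivable_x k y x :
  derivable_pt_lim (fun t => ps_term_x k t y) x (ps_term_xx k x y).
Proof.
  eapply derivable_pt_lim_eq_r;
    [apply derivable_pt_lim_scal, (proj1 (derivable_re_im_pow_x _ _ _)) |].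
  unfold ps_term_xx, coef_family; replace (m k - 1 - 1)%nat with (m k - 2)%nat by lia; ring.
Qed.

Lemma ps_term_x_derivable_y k x y :
  derivable_pt_lim (fun t => ps_term_x k x t) y (ps_term_xy k x y).
Proof.
  eapply derivable_pt_lim_eq_r;
    [apply derivable_pt_lim_scal, (proj1 (derivable_re_im_pow_y _ _ _)) |].
  unfold ps_term_xy, coef_family; replace (m k - 1 - 1)%nat with (m k - 2)%nat by lia; ring.
Qed.

Lemma ps_term_y_derivable_x k y x :
  derivable_pt_lim (fun t => ps_term_y k t y) x (ps_term_xy k x y).
Proof.
  eapply derivable_pt_lim_eq_r;
    [apply derivable_pt_lim_scal, (proj2 (derivable_re_im_pow_x _ _ _)) |].
  unfold ps_term_xy, coef_family; replace (m k - 1 - 1)%nat with (m k - 2)%nat by lia; ring.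
Qed.

Lemma ps_term_y_derivable_y k x y :
  derivable_pt_lim (fun t => ps_term_y k x t) y (ps_term_yy k x y).
Proof.
  eapply derivable_pt_lim_eq_r;
    [apply derivable_pt_lim_scal, (proj2 (derivable_re_im_pow_y _ _ _)) |].
  unfold ps_term_yy, coef_family; replace (m k - 1 - 1)%nat with (m k - 2)%nat by lia; ring.
Qed.

Lemma ps_coef_bounds k :
  Rabs (c k) <= Rabs (c k) * INR (S (m k)) ^ 2 /\
  Rabs (c k) * INR (m k) <= Rabs (c k) * INR (S (m k)) ^ 2 /\
  Rabs (c k) * INR (m k) * INR (m k - 1) <= Rabs (c k) * INR (S (m k)) ^ 2.
Proof.
  pose proof (pos_INR (m k)); pose proof (pos_INR (m k - 1)); pose proof (Rabs_pos (c k)).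
  assert (INR (m k - 1) <= INR (m k)) by (apply le_INR; lia).
  rewrite S_INR; repeat split;
    [rewrite <- (Rmult_1_r (Rabs (c k))) at 1 | | rewrite Rmult_assoc];
    apply Rmult_le_compat_l; nra.
Qed.

Theorem re_power_series_harmonic :
  (forall x y, in_disk x y ->
     Un_cv (fun N => sum_f_R0 (fun k => c k * re_pow (m k) x y) N) (series_sum ps_term x y)) /\
  harmonic_on_disk (series_sum ps_term).
Proof.
  assert (Hre : forall n x y r, 0 <= r -> x * x + y * y <= r * r -> Rabs (re_pow n x y) <= r ^ n)
    by (intros; apply re_im_pow_bound; assumption).
  assert (Him : forall n x y r, 0 <= r -> x * x + y * y <= r * r -> Rabs (im_pow n x y) <= r ^ n)
    by (intros; apply re_im_pow_bound; assumption).
  assert (Hcoef : forall k, Rabs (c k) <= Rabs (c k) * INR (S (m k)) ^ 2 /\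
    Rabs (- (c k * INR (m k))) <= Rabs (c k) * INR (S (m k)) ^ 2 /\
    Rabs (- (c k * INR (m k) * INR (m k - 1))) <= Rabs (c k) * INR (S (m k)) ^ 2).
  { intro k; rewrite !Rabs_Ropp, !Rabs_mult, (Rabs_pos_eq (INR (m k))),
      (Rabs_pos_eq (INR (m k - 1))) by apply pos_INR; apply ps_coef_bounds. }
  assert (S0 : normally_summable_on_subdisks ps_term)
    by (apply coef_family_summable; [exact Hre | apply Hcoef | intro; lia]).
  assert (Sx : normally_summable_on_subdisks ps_term_x).
  { apply coef_family_summable; [exact Hre | | intro; lia].
    intro k; rewrite <- Rabs_Ropp; apply Hcoef. }
  assert (Sy : normally_summable_on_subdisks ps_term_y)
    by (apply coef_family_summable; [exact Him | apply Hcoef | intro; lia]).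
  assert (Sxx : normally_summable_on_subdisks ps_term_xx).
  { apply coef_family_summable; [exact Hre | | intro; lia].
    intro k; rewrite <- Rabs_Ropp; apply Hcoef. }
  assert (Sxy : normally_summable_on_subdisks ps_term_xy)
    by (apply coef_family_summable; [exact Him | apply Hcoef | intro; lia]).
  assert (Syy : normally_summable_on_subdisks ps_term_yy)
    by (apply coef_family_summable; [exact Hre | apply Hcoef | intro; lia]).
  assert (Hre_cont : forall n x y, continuous2_at (re_pow n) x y)
    by (intros; apply continuous2_at_re_im_pow).
  assert (Him_cont : forall n x y, continuous2_at (im_pow n) x y)
    by (intros; apply continuous2_at_re_im_pow).
  split; [intros x y Hxy; exact (series_sum_cv ps_term S0 x y Hxy)|].
  exists (series_sum ps_term_x), (series_sum ps_term_y), (series_sum ps_term_xx),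
    (series_sum ps_term_xy), (series_sum ps_term_xy), (series_sum ps_term_yy).
  split; [intros x y Hxy; repeat split|].
  - exact (series_sum_derivable_x _ _ S0 Sx ps_term_derivable_x x y Hxy).
  - exact (series_sum_derivable_y _ _ S0 Sy ps_term_derivable_y x y Hxy).
  - exact (series_sum_derivable_x _ _ Sx Sxx ps_term_x_derivable_x x y Hxy).
  - exact (series_sum_derivable_y _ _ Sx Sxy ps_term_x_derivable_y x y Hxy).
  - exact (series_sum_derivable_x _ _ Sy Sxy ps_term_y_derivable_x x y Hxy).
  - exact (series_sum_derivable_y _ _ Sy Syy ps_term_y_derivable_y x y Hxy).
  - apply series_sum_add_eq_0; auto.
    intros; unfold ps_term_xx, ps_term_yy, coef_family; ring.
  - repeat split; apply series_sum_continuous; auto;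
      intros; apply continuous2_at_coef_family; auto.
Qed.

End PowerSeries.

(** * The lacunary series *)

Lemma sum_pow_le t N : 0 <= t < 1 -> sum_f_R0 (fun k => t ^ k) N <= / (1 - t).
Proof.
  intro Ht; pose proof (GP_finite t N); pose proof (pow_le t (N + 1) (proj1 Ht)).
  apply (Rmult_le_reg_r (1 - t)); [lra|]; rewrite Rinv_l by lra; nra.
Qed.

Definition nat_dist (k p : nat) : nat := (k - p + (p - k))%nat.

Lemma sum_pow_nat_dist_le t p N : 0 <= t < 1 ->
  sum_f_R0 (fun k => t ^ nat_dist k p) N <= (1 + t) / (1 - t).
Proof.
  intro Ht.
  (* Invariant multiplied through by 1 - t; the extra t^(p+1) absorbs the shift in p *)
  assert (Hinv : forall p N,
    (1 - t) * sum_f_R0 (fun k => t ^ nat_dist k p) N + t ^ S p <= 1 + t).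
  { clear p N; intro p; induction p as [|p IH]; intro N.
    - rewrite (sum_eq _ (fun k => t ^ k)) by (intros k _; unfold nat_dist; f_equal; lia).
      pose proof (GP_finite t N); pose proof (pow_le t (N + 1) (proj1 Ht)); simpl; nra.
    - assert (Hle1 : t ^ S p <= 1)
        by (rewrite <- (pow_O t); apply pow_le_pow_of_le_1; [lra | lia]).
      pose proof (pow_le t (S p) (proj1 Ht)).
      change (t ^ S (S p)) with (t * t ^ S p).
      destruct N as [|N].
      + simpl; unfold nat_dist; simpl (0 - S p + (S p - 0))%nat; simpl in *; nra.
      + rewrite decomp_sum by lia; simpl Nat.pred.
        specialize (IH N); unfold nat_dist in *; simpl (0 - S p + (S p - 0))%nat.
        simpl (fun i => t ^ (S i - S p + (S p - S i))); nra. }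
  specialize (Hinv p N); pose proof (pow_le t (S p) (proj1 Ht)).
  apply (Rmult_le_reg_l (1 - t)); [lra|].
  replace ((1 - t) * ((1 + t) / (1 - t))) with (1 + t) by (field; lra); lra.
Qed.

Lemma le_sum_abs (a : nat -> R) j N : (j <= N)%nat -> a j <= sum_f_R0 (fun i => Rabs (a i)) N.
Proof.
  intro HjN; induction N as [|N IH].
  - replace j with 0%nat by lia; apply Rle_abs.
  - simpl; pose proof (Rabs_pos (a (S N))).
    destruct (Nat.eq_dec j (S N)) as [->|Hj].
    + pose proof (cond_pos_sum (fun i => Rabs (a i)) N (fun i => Rabs_pos (a i))).
      pose proof (Rle_abs (a (S N))); lra.
    + specialize (IH ltac:(lia)); lra.
Qed.

Lemma eventually_nonincreasing_bounded (a : nat -> R) N :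
  (forall j, (N <= j)%nat -> a (S j) <= a j) -> exists C, forall j, a j <= C.
Proof.
  intro Hdecr; exists (sum_f_R0 (fun i => Rabs (a i)) N); intro j.
  destruct (Nat.le_gt_cases j N) as [HjN|HNj]; [now apply le_sum_abs|].
  apply Rle_trans with (a N); [|now apply le_sum_abs].
  replace j with (N + (j - N))%nat by lia; induction (j - N)%nat as [|i IH];
    [rewrite Nat.add_0_r; lra|].
  rewrite Nat.add_succ_r; eapply Rle_trans; [apply Hdecr; lia | exact IH].
Qed.

Lemma pow_mul_pow_pow2_bounded E rho : 0 <= E -> 0 <= rho < 1 ->
  exists C, forall j, E ^ j * rho ^ Nat.pow 2 j <= C.
Proof.
  intros HE Hrho.
  destruct (pow_lt_1_zero rho ltac:(rewrite Rabs_pos_eq; lra) (/ (E + 1)))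
    as [N HN]; [apply Rinv_0_lt_compat; lra|].
  apply (eventually_nonincreasing_bounded _ N); intros j Hj.
  assert (Hjpow : (j < Nat.pow 2 j)%nat) by (apply Nat.pow_gt_lin_r; lia).
  specialize (HN (Nat.pow 2 j) ltac:(lia)).
  set (s := rho ^ Nat.pow 2 j) in *.
  assert (Hs : 0 <= s) by (apply pow_le; lra).
  rewrite Rabs_pos_eq in HN by exact Hs.
  assert (HEs : E * s <= 1).
  { apply (Rmult_lt_compat_l (E + 1)) in HN; [|lra].
    rewrite Rinv_r in HN by lra; nra. }
  rewrite Nat.pow_succ_r', Nat.mul_comm, pow_mult; fold s; simpl.
  pose proof (pow_le E j HE).
  assert (0 <= E ^ j * s) by (apply Rmult_le_pos; lra).
  replace (E * E ^ j * (s * (s * 1))) with ((E ^ j * s) * (E * s)) by ring; nra.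
Qed.

Definition dyadic_radius (l : nat) : R := 1 - / 2 ^ l.

Lemma dyadic_radius_bounds l : 0 <= dyadic_radius l < 1.
Proof.
  unfold dyadic_radius; pose proof (pow_R1_Rle 2 l ltac:(lra)).
  assert (0 < / 2 ^ l) by (apply Rinv_0_lt_compat; lra).
  assert (/ 2 ^ l <= 1) by (rewrite <- Rinv_1; apply Rinv_le_contravar; lra).
  lra.
Qed.

Lemma dyadic_radius_le l l' : (l <= l')%nat -> dyadic_radius l <= dyadic_radius l'.
Proof.
  intro Hl; unfold dyadic_radius; pose proof (pow_R1_Rle 2 l ltac:(lra)).
  pose proof (Rle_pow 2 l l' ltac:(lra) Hl).
  assert (/ 2 ^ l' <= / 2 ^ l) by (apply Rinv_le_contravar; lra); lra.
Qed.

(* Bernoulli: (1 - 1/M)^M (1 + 1/M)^M <= 1 and (1 + 1/M)^M >= 2. *)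
Lemma dyadic_radius_pow_le_half l : dyadic_radius l ^ Nat.pow 2 l <= / 2.
Proof.
  set (M := Nat.pow 2 l); set (x := / 2 ^ l).
  assert (HM : INR M * x = 1).
  { unfold M, x; rewrite pow_INR; replace (INR 2) with 2 by (simpl; ring).
    field; apply pow_nonzero; lra. }
  pose proof (dyadic_radius_bounds l) as Hr; unfold dyadic_radius in *; fold x in Hr |- *.
  assert (Hx : 0 < x) by (apply Rinv_0_lt_compat, pow_lt; lra).
  pose proof (poly M x Hx) as Hbern; rewrite HM in Hbern.
  assert ((1 - x) ^ M * (1 + x) ^ M <= 1).
  { rewrite <- Rpow_mult_distr; apply Rle_trans with (1 ^ M);
      [apply pow_incr; nra | rewrite pow1; lra]. }
  pose proof (pow_le (1 - x) M ltac:(lra)); nra.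
Qed.

Section LacunarySeries.

Variables (v : R -> R) (D A : R) (b : nat -> nat).

Hypothesis v_weight : standing_weight v.
Hypothesis D_ge_1 : 1 <= D.
Hypothesis v_doubling : forall d, 0 < d <= / 2 -> v (1 - d) <= D * v (1 - 2 * d).
Hypothesis A_gt_1 : 1 < A.
Hypothesis b_0 : b 0%nat = 1%nat.
Hypothesis b_spec : forall n, gfun v (2 ^ b (S n)) > A * gfun v (2 ^ b n) /\
  forall l : nat, gfun v (2 ^ l) > A * gfun v (2 ^ b n) -> (b (S n) <= l)%nat.

Lemma weight_ge_1 r : 0 <= r < 1 -> 1 <= v r.
Proof. apply v_weight. Qed.

Lemma weight_le r s : 0 <= r -> r <= s -> s < 1 -> v r <= v s.
Proof. apply v_weight. Qed.

Lemma gfun_dyadic l : gfun v (2 ^ l) = v (dyadic_radius l).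
Proof. reflexivity. Qed.

Lemma gfun_dyadic_ge_1 l : 1 <= gfun v (2 ^ l).
Proof. rewrite gfun_dyadic; apply weight_ge_1, dyadic_radius_bounds. Qed.

Lemma gfun_dyadic_le l l' : (l <= l')%nat -> gfun v (2 ^ l) <= gfun v (2 ^ l').
Proof.
  intro Hl; pose proof (dyadic_radius_bounds l); pose proof (dyadic_radius_bounds l').
  rewrite !gfun_dyadic; apply weight_le; [lra | apply dyadic_radius_le, Hl | lra].
Qed.

Lemma gfun_dyadic_succ_le l : gfun v (2 ^ S l) <= D * gfun v (2 ^ l).
Proof.
  unfold gfun; pose proof (pow_R1_Rle 2 l ltac:(lra)).
  replace (1 - / 2 ^ l) with (1 - 2 * / 2 ^ S l) by (simpl; field; lra).
  apply v_doubling; simpl; rewrite Rinv_mult; split.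
  - apply Rmult_lt_0_compat; apply Rinv_0_lt_compat; lra.
  - assert (/ 2 ^ l <= 1) by (rewrite <- Rinv_1; apply Rinv_le_contravar; lra).
    assert (0 < / 2 ^ l) by (apply Rinv_0_lt_compat; lra); nra.
Qed.

Lemma gfun_dyadic_add_le l j : gfun v (2 ^ (l + j)) <= D ^ j * gfun v (2 ^ l).
Proof.
  induction j as [|j IH]; [rewrite Nat.add_0_r; simpl; lra|].
  rewrite Nat.add_succ_r; eapply Rle_trans; [apply gfun_dyadic_succ_le|].
  simpl; rewrite Rmult_assoc; apply Rmult_le_compat_l; lra.
Qed.

Lemma gfun_dyadic_le_pow l : gfun v (2 ^ l) <= D ^ l.
Proof.
  assert (Hg0 : gfun v (2 ^ 0) = 1).
  { unfold gfun; simpl; replace (1 - / 1) with 0 by field; apply v_weight. }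
  pose proof (gfun_dyadic_add_le 0 l) as H; rewrite Hg0, Rmult_1_r in H; exact H.
Qed.

Lemma b_lt_succ n : (b n < b (S n))%nat.
Proof.
  destruct (Nat.le_gt_cases (b (S n)) (b n)) as [Hle|Hlt]; [exfalso|exact Hlt].
  pose proof (gfun_dyadic_le _ _ Hle); pose proof (gfun_dyadic_ge_1 (b n)).
  destruct (b_spec n) as [Hgrow _]; nra.
Qed.

Lemma b_add_le k i : (b k + i <= b (k + i))%nat.
Proof.
  induction i as [|i IH]; [rewrite !Nat.add_0_r; lia|].
  pose proof (b_lt_succ (k + i)); replace (k + S i)%nat with (S (k + i)) by lia; lia.
Qed.

Lemma lt_b k : (k < b k)%nat.
Proof. pose proof (b_add_le 0 k); simpl in *; lia. Qed.

Lemma gfun_b_mul_pow_le k i : gfun v (2 ^ b k) * A ^ i <= gfun v (2 ^ b (k + i)).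
Proof.
  induction i as [|i IH]; [rewrite Nat.add_0_r; simpl; lra|].
  replace (k + S i)%nat with (S (k + i)) by lia; destruct (b_spec (k + i)) as [Hgrow _].
  pose proof (pow_le A i ltac:(lra)); pose proof (gfun_dyadic_ge_1 (b k)); simpl; nra.
Qed.

(* Minimality of b (S n): one dyadic step below it, g has not yet grown by the factor A. *)
Lemma gfun_b_succ_le n : gfun v (2 ^ b (S n)) <= D * A * gfun v (2 ^ b n).
Proof.
  pose proof (lt_b (S n)); destruct (b (S n)) as [|l] eqn:Hbn; [lia|].
  assert (Hl : gfun v (2 ^ l) <= A * gfun v (2 ^ b n)).
  { apply Rnot_gt_le; intro Hgt; destruct (b_spec n) as [_ Hmin].
    specialize (Hmin l Hgt); lia. }
  eapply Rle_trans; [apply gfun_dyadic_succ_le|]; rewrite Rmult_assoc.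
  apply Rmult_le_compat_l; lra.
Qed.

Lemma exists_first_index r : 0 <= r < 1 ->
  exists p, r < dyadic_radius (b p) /\ forall k, (k < p)%nat -> dyadic_radius (b k) <= r.
Proof.
  intro Hr.
  assert (Hex : exists p, r < dyadic_radius (b p)).
  { destruct (pow_lt_1_zero (/ 2) ltac:(rewrite Rabs_pos_eq; lra) (1 - r) ltac:(lra))
      as [M HM].
    exists M; specialize (HM (b M) ltac:(pose proof (lt_b M); lia)).
    rewrite Rabs_pos_eq, pow_inv in HM by (apply pow_le; lra).
    unfold dyadic_radius; lra. }
  destruct (dec_inh_nat_subset_has_unique_least_element _ (fun p => classic _) Hex)
    as [p [[Hp Hmin] _]].
  exists p; split; [exact Hp|]; intros k Hk; apply Rnot_lt_le; intro Hlt.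
  specialize (Hmin k Hlt); lia.
Qed.

Section FirstIndex.

Variables (r : R) (p : nat).
Hypothesis r_range : 0 <= r < 1.
Hypothesis r_ge : forall k, (k < p)%nat -> dyadic_radius (b k) <= r.

Lemma gfun_first_index_le : gfun v (2 ^ b p) <= D * A * v r.
Proof.
  pose proof (weight_ge_1 r r_range).
  destruct p as [|q].
  - rewrite b_0; pose proof (gfun_dyadic_succ_le 0); pose proof (gfun_dyadic_le_pow 0).
    assert (1 <= A * v r) by nra; simpl in *; nra.
  - eapply Rle_trans; [apply gfun_b_succ_le|]; apply Rmult_le_compat_l; [nra|].
    rewrite gfun_dyadic; pose proof (dyadic_radius_bounds (b q)).
    apply weight_le; [lra | apply r_ge; lia | lra].
Qed.

Lemma gfun_before_first_index_le k : (k < p)%nat ->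
  gfun v (2 ^ b k) <= A * v r * (/ A) ^ (p - k).
Proof.
  intro Hk; set (i := (p - S k)%nat).
  assert (Hgi : gfun v (2 ^ b k) * A ^ i <= v r).
  { eapply Rle_trans; [apply gfun_b_mul_pow_le|].
    rewrite gfun_dyadic; pose proof (dyadic_radius_bounds (b (k + i))).
    apply weight_le; [lra | apply r_ge; unfold i; lia | lra]. }
  replace (p - k)%nat with (S i) by (unfold i; lia).
  assert (Hinv : A ^ i * (/ A) ^ i = 1)
    by (rewrite <- Rpow_mult_distr, Rinv_r, pow1; lra).
  pose proof (pow_le (/ A) i ltac:(left; apply Rinv_0_lt_compat; lra)).
  replace (A * v r * (/ A) ^ S i) with (v r * (/ A) ^ i) by (simpl; field; lra).
  replace (gfun v (2 ^ b k)) with (gfun v (2 ^ b k) * A ^ i * (/ A) ^ i)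
    by (rewrite Rmult_assoc, Hinv; ring).
  apply Rmult_le_compat_r; lra.
Qed.

(* Doubling lets g grow by at most D per dyadic step, while r^(2^(b_k)) decays
   doubly exponentially in b_k - b_p. *)
Lemma term_after_first_index_le k C :
  (forall j, (2 * D) ^ j * (/ 2) ^ Nat.pow 2 j <= C) ->
  r < dyadic_radius (b p) -> (p <= k)%nat ->
  gfun v (2 ^ b k) * r ^ Nat.pow 2 (b k) <= C * gfun v (2 ^ b p) * (/ 2) ^ (k - p).
Proof.
  intros HC r_lt Hpk; set (j := (b k - b p)%nat).
  pose proof (b_add_le p (k - p)) as Hb; replace (p + (k - p))%nat with k in Hb by lia.
  assert (Hbk : b k = (b p + j)%nat) by (unfold j; lia).
  assert (HC0 : / 2 <= C) by (specialize (HC 0%nat); simpl in HC; lra).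
  assert (Hg : gfun v (2 ^ b k) <= D ^ j * gfun v (2 ^ b p))
    by (rewrite Hbk; apply gfun_dyadic_add_le).
  assert (Hpow : r ^ Nat.pow 2 (b k) <= (/ 2) ^ Nat.pow 2 j).
  { rewrite Hbk, Nat.pow_add_r, pow_mult; apply pow_incr; split; [apply pow_le; lra|].
    eapply Rle_trans; [apply pow_incr; split; [lra | left; apply r_lt]|].
    apply dyadic_radius_pow_le_half. }
  assert (Hdamp : D ^ j * (/ 2) ^ Nat.pow 2 j <= C * (/ 2) ^ (k - p)).
  { assert (Hhalf : 2 ^ j * (/ 2) ^ j = 1)
      by (rewrite <- Rpow_mult_distr, Rinv_r, pow1; lra).
    specialize (HC j); rewrite Rpow_mult_distr in HC.
    apply Rle_trans with (C * (/ 2) ^ j).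
    - replace (D ^ j * (/ 2) ^ Nat.pow 2 j)
        with (2 ^ j * D ^ j * (/ 2) ^ Nat.pow 2 j * (/ 2) ^ j)
        by (transitivity (D ^ j * (/ 2) ^ Nat.pow 2 j * (2 ^ j * (/ 2) ^ j));
            [| rewrite Hhalf]; ring).
      apply Rmult_le_compat_r; [apply pow_le; lra | exact HC].
    - apply Rmult_le_compat_l; [lra | apply pow_le_pow_of_le_1; [lra | unfold j; lia]]. }
  pose proof (gfun_dyadic_ge_1 (b k)); pose proof (gfun_dyadic_ge_1 (b p)).
  pose proof (pow_le D j ltac:(lra)).
  pose proof (pow_le r (Nat.pow 2 (b k)) (proj1 r_range)).
  pose proof (pow_le (/ 2) (Nat.pow 2 j) ltac:(lra)).
  apply Rle_trans with (D ^ j * gfun v (2 ^ b p) * (/ 2) ^ Nat.pow 2 j);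
    [apply Rmult_le_compat; lra|].
  replace (C * gfun v (2 ^ b p) * (/ 2) ^ (k - p))
    with (gfun v (2 ^ b p) * (C * (/ 2) ^ (k - p))) by ring.
  replace (D ^ j * gfun v (2 ^ b p) * (/ 2) ^ Nat.pow 2 j)
    with (gfun v (2 ^ b p) * (D ^ j * (/ 2) ^ Nat.pow 2 j)) by ring.
  apply Rmult_le_compat_l; lra.
Qed.

End FirstIndex.

Lemma lacunary_sum_le_weight : exists K, 0 < K /\ forall r, 0 <= r < 1 -> forall N,
  sum_f_R0 (fun k => gfun v (2 ^ b k) * r ^ Nat.pow 2 (b k)) N <= K * v r.
Proof.
  destruct (pow_mul_pow_pow2_bounded (2 * D) (/ 2) ltac:(lra) ltac:(lra)) as [C HC].
  assert (HC0 : 0 <= C) by (specialize (HC 0%nat); simpl in HC; lra).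
  assert (HAinv : 0 < / A < 1)
    by (split; [apply Rinv_0_lt_compat | rewrite <- Rinv_1; apply Rinv_lt_contravar]; lra).
  pose proof (Rmax_l (/ A) (/ 2)); pose proof (Rmax_r (/ A) (/ 2)).
  set (t := Rmax (/ A) (/ 2)) in *.
  assert (Ht : 0 <= t < 1) by (split; [lra | apply Rmax_lub_lt; lra]).
  set (K1 := A + C * D * A).
  assert (HK1 : 0 < K1) by (unfold K1; assert (0 <= C * D * A) by
    (repeat apply Rmult_le_pos; lra); lra).
  exists (K1 * ((1 + t) / (1 - t))); split;
    [apply Rmult_lt_0_compat; [exact HK1 | apply Rdiv_lt_0_compat; lra]|].
  intros r Hr N.
  destruct (exists_first_index r Hr) as [p [Hlt Hge]].
  pose proof (weight_ge_1 r Hr).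
  assert (Hterm : forall k,
    gfun v (2 ^ b k) * r ^ Nat.pow 2 (b k) <= t ^ nat_dist k p * (K1 * v r)).
  { intro k; pose proof (gfun_dyadic_ge_1 (b k)).
    pose proof (pow_le r (Nat.pow 2 (b k)) (proj1 Hr)).
    destruct (Nat.le_gt_cases p k) as [Hpk|Hkp].
    - replace (nat_dist k p) with (k - p)%nat by (unfold nat_dist; lia).
      pose proof (term_after_first_index_le r p Hr k C HC Hlt Hpk).
      pose proof (gfun_first_index_le r p Hr Hge).
      pose proof (pow_le (/ 2) (k - p) ltac:(lra)).
      assert ((/ 2) ^ (k - p) <= t ^ (k - p)) by (apply pow_incr; lra).
      assert (0 <= A * v r * t ^ (k - p)) by (apply Rmult_le_pos; [nra | apply pow_le; lra]).
      pose proof (gfun_dyadic_ge_1 (b p)).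
      assert (C * gfun v (2 ^ b p) * (/ 2) ^ (k - p) <= C * (D * A * v r) * t ^ (k - p))
        by (apply Rmult_le_compat; [apply Rmult_le_pos | | apply Rmult_le_compat_l |]; lra).
      unfold K1; nra.
    - replace (nat_dist k p) with (p - k)%nat by (unfold nat_dist; lia).
      pose proof (gfun_before_first_index_le r p Hr Hge k Hkp).
      assert (r ^ Nat.pow 2 (b k) <= 1)
        by (rewrite <- (pow1 (Nat.pow 2 (b k))); apply pow_incr; lra).
      assert ((/ A) ^ (p - k) <= t ^ (p - k)) by (apply pow_incr; lra).
      assert (0 <= C * D * A * v r * t ^ (p - k))
        by (repeat apply Rmult_le_pos; try apply pow_le; lra).
      assert (A * v r * (/ A) ^ (p - k) <= A * v r * t ^ (p - k))
        by (apply Rmult_le_compat_l; nra).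
      unfold K1; nra. }
  eapply Rle_trans; [apply sum_Rle; intros k _; apply Hterm|].
  rewrite <- scal_sum.
  pose proof (sum_pow_nat_dist_le t p N Ht).
  replace (K1 * ((1 + t) / (1 - t)) * v r) with (K1 * v r * ((1 + t) / (1 - t))) by ring.
  apply Rmult_le_compat_l; [nra | assumption].
Qed.

Lemma lacunary_coef_summable rho : 0 <= rho < 1 -> exists B, forall N,
  sum_f_R0 (fun k => Rabs (gfun v (2 ^ b k)) * INR (S (Nat.pow 2 (b k))) ^ 2
                     * rho ^ Nat.pow 2 (b k)) N <= B.
Proof.
  intro Hrho.
  destruct (pow_mul_pow_pow2_bounded (8 * D) rho ltac:(lra) Hrho) as [C HC].
  assert (HC0 : 0 <= C) by (specialize (HC 0%nat); simpl in HC; lra).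
  exists (4 * C * 2); intro N.
  apply Rle_trans with (sum_f_R0 (fun k => (/ 2) ^ k * (4 * C)) N).
  - apply sum_Rle; intros k _.
    set (l := b k); specialize (HC l).
    pose proof (gfun_dyadic_ge_1 l); pose proof (gfun_dyadic_le_pow l).
    set (M := Nat.pow 2 l) in *; set (s := 2 ^ l) in *.
    assert (HM : INR (S M) = s + 1)
      by (unfold M, s; rewrite S_INR, pow_INR; replace (INR 2) with 2 by (simpl; ring); lra).
    assert (Hs : 1 <= s) by (apply pow_R1_Rle; lra).
    pose proof (pow_le rho M (proj1 Hrho)); pose proof (pow_le D l ltac:(lra)).
    rewrite !Rpow_mult_distr in HC.
    replace (8 ^ l) with (s * s * s) in HC
      by (unfold s; rewrite <- !Rpow_mult_distr; f_equal; ring).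
    assert (Hk : (/ 2) ^ l <= (/ 2) ^ k)
      by (apply pow_le_pow_of_le_1; [lra | pose proof (lt_b k); unfold l; lia]).
    replace ((/ 2) ^ l) with (/ s) in Hk by (unfold s; rewrite pow_inv; reflexivity).
    rewrite Rabs_pos_eq, HM by lra.
    assert (Hsq : (s + 1) ^ 2 <= 4 * (s * s)) by nra.
    apply Rle_trans with (D ^ l * (4 * (s * s)) * rho ^ M);
      [apply Rmult_le_compat_r; [lra | apply Rmult_le_compat; try lra; apply pow2_ge_0]|].
    apply Rle_trans with (4 * C * / s); [|rewrite Rmult_comm; apply Rmult_le_compat_r; lra].
    replace (D ^ l * (4 * (s * s)) * rho ^ M) with (4 * (s * s * s * D ^ l * rho ^ M) * / s)
      by (field; lra).
    apply Rmult_le_compat_r; [left; apply Rinv_0_lt_compat; lra | lra].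
  - rewrite <- scal_sum; apply Rmult_le_compat_l; [lra|].
    apply Rle_trans with (/ (1 - / 2)); [apply sum_pow_le; lra | right; field].
Qed.

Lemma lacunary_partial_sum_abs_le : exists K, 0 < K /\ forall x y N, in_disk x y ->
  Rabs (sum_f_R0 (fun k => gfun v (2 ^ b k) * re_pow (Nat.pow 2 (b k)) x y) N)
    <= K * v (sqrt (x * x + y * y)).
Proof.
  destruct lacunary_sum_le_weight as [K [HK Hsum]].
  exists K; split; [exact HK|]; intros x y N Hxy; unfold in_disk in Hxy.
  set (r := sqrt (x * x + y * y)).
  assert (Hr : 0 <= r < 1)
    by (split; [apply sqrt_pos | unfold r; rewrite <- sqrt_1; apply sqrt_lt_1; nra]).
  assert (Hxyr : x * x + y * y <= r * r) by (unfold r; rewrite sqrt_sqrt; nra).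
  eapply Rle_trans; [apply Rabs_triang_gen|].
  eapply Rle_trans; [|apply (Hsum r Hr N)].
  apply sum_Rle; intros k _; pose proof (gfun_dyadic_ge_1 (b k)).
  rewrite Rabs_mult, Rabs_pos_eq by lra.
  apply Rmult_le_compat_l; [lra | apply re_im_pow_bound; lra].
Qed.

End LacunarySeries.

Theorem lemma8 (v : R -> R) (A : R) (b : nat -> nat) :
  standing_weight v -> doubling v -> 1 < A ->
  b 0%nat = 1%nat ->
  (forall n, gfun v (2 ^ b (S n)) > A * gfun v (2 ^ b n) /\
     forall l : nat, gfun v (2 ^ l) > A * gfun v (2 ^ b n) -> (b (S n) <= l)%nat) ->
  exists u : R -> R -> R,
    (forall x y, in_disk x y ->
       Un_cv (fun N => sum_f_R0
                (fun k => gfun v (2 ^ b k) * fst (cpow x y (Nat.pow 2 (b k)))) N)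
             (u x y)) /\
    in_h_inf_v v u.
Proof.
  intros Hv [D [HD Hdoubling]] HA Hb0 Hb.
  destruct (re_power_series_harmonic (fun k => gfun v (2 ^ b k)) (fun k => Nat.pow 2 (b k))
    (lacunary_coef_summable v D A b Hv HD Hdoubling HA Hb0 Hb)) as [Hcv Hharmonic].
  destruct (lacunary_partial_sum_abs_le v D A b Hv HD Hdoubling HA Hb0 Hb) as [K [HK Hbound]].
  eexists; split; [exact Hcv|]; split; [exact Hharmonic|].
  exists K; split; [exact HK|]; intros x y Hxy.
  exact (Rabs_lim_le _ _ _ (Hcv x y Hxy) (fun N => Hbound x y N Hxy)).
Qed.
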